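(* For positive integers $p,q,r,s,t,u$, the transition maps satisfy: (1) $T^{p,q,r}_{s,t,u}:\Lambda^{p,q,r}\to\Lambda^{s,t,u}$ is well-defined; (2) $T^{p,q,r}_{s,t,u}$ is order-preserving; (3) $T^{s,t,u}_{p,q,r}\circ T^{p,q,r}_{s,t,u}\le\mathrm{id}_{\Lambda^{p,q,r}}$ (pointwise); (4) $T^{s,t,u}_{p,q,r}\circ T^{p,q,r}_{s,t,u}=\mathrm{id}_{\Lambda^{p,q,r}}$ if $p\le s$, $q\le t$ and $r\le u$; (5) $(T^{p,q,r}_{s,t,u})^{-1}(0)=\{0\}$ if each of the pairs $(p,s),(q,t),(r,u)$ lies in $\{(1,1)\}\cup(\mathbb{N}_{\ge2})^2$.
   Context: $\mathbb{N}=\{0,1,2,\dots\}$. For positive integers $p,q,r$, $\Lambda^{p,q,r}=\langle a,b,c\mid pa+qb=rc\rangle$ is the quotient of the free commutative monoid $\mathbb{N}a\oplus\mathbb{N}b\oplus\mathbb{N}c$ by the congruence generated by $\lambda+pa+qb\sim\lambda+rc$; it is ordered by $\lambda\le\mu$ iff $\lambda+\nu=\mu$ for some $\nu\in\Lambda^{p,q,r}$. The transition function $\tau^p_q:\mathbb{N}\to\mathbb{N}$ is $\tau^p_q(mp+n)=mq+\min\{n,q-1\}$ ($m\in\mathbb{N}$, $0\le n<p$). The transition map $T^{p,q,r}_{s,t,u}:\Lambda^{p,q,r}\to\Lambda^{s,t,u}$ is $T^{p,q,r}_{s,t,u}(ma+nb+kc)=\tau^p_s(m)a+\tau^q_t(n)b+\tau^r_u(k)c$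 for $m,n,k\in\mathbb{N}$. For maps $f,g$ into a poset, $f\le g$ means $f(x)\le g(x)$ for all $x$. *)

From Stdlib Require Import Arith Relations.

(* Elements of the free commutative monoid Na (+) Nb (+) Nc, as triples (m,n,k)
   standing for m a + n b + k c. *)
Definition triple := (nat * nat * nat)%type.

Definition tadd (x y : triple) : triple :=
  let '(m1, n1, k1) := x in let '(m2, n2, k2) := y in (m1 + m2, n1 + n2, k1 + k2).

Definition lam_step (p q r : nat) (x y : triple) : Prop :=
  exists l : triple, x = tadd l (p, q, 0) /\ y = tadd l (0, 0, r).

(* The congruence generated (equivalence closure of a translation-invariant
   relation; this is the congruence defining Lambda^{p,q,r}). *)
Definition lam_eq (p q r : nat) : relation triple :=
  clos_refl_sym_trans triple (lam_step p q r).

Definition lam_le (p q r : nat) (x y : triple) : Prop :=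
  exists nu : triple, lam_eq p q r (tadd x nu) y.

Definition tau (p q x : nat) : nat :=
  (x / p) * q + Nat.min (x mod p) (q - 1).

Definition T (p q r s t u : nat) (x : triple) : triple :=
  let '(m, n, k) := x in (tau p s m, tau q t n, tau r u k).

Definition good_pair (p s : nat) : Prop :=
  (p = 1 /\ s = 1) \/ (2 <= p /\ 2 <= s).

(* Write x = a p + b with b < p.  Then tau^p_s x = a s + min b (s-1): the quotient
   part is rescaled and the remainder is clipped.  Adding p to x adds s to its
   image, so T sends each generating relation pa + qb = rc to sa + tb = uc and
   hence respects the congruence; tau is monotone, so T respects the order.
   Going back, tau^s_p (tau^p_s x) = a p + min (min b (s-1)) (p-1) <= x, with equality
   when p <= s.  Finally the class of 0 is a singleton, because a generating
   relation never involves 0 on either side; and under the pairing condition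
   a s + min b (s-1) = 0 forces a = b = 0. *)
From Stdlib Require Import Arith Relations Lia.

Lemma clos_rst_map {A B : Type} (R : relation A) (S : relation B) (f : A -> B) :
  (forall x y, R x y -> S (f x) (f y)) ->
  forall x y, clos_refl_sym_trans A R x y -> clos_refl_sym_trans B S (f x) (f y).
Proof.
  intros HRS x y Hxy.
  induction Hxy as [x y Hxy | x | x y _ IH | x y z _ IHxy _ IHyz].
  - apply rst_step, HRS, Hxy.
  - apply rst_refl.
  - apply rst_sym, IH.
  - apply rst_trans with (f y); assumption.
Qed.

Lemma clos_rst_invariant {A : Type} (R : relation A) (P : A -> Prop) :
  (forall x y, R x y -> (P x <-> P y)) ->
  forall x y, clos_refl_sym_trans A R x y -> (P x <-> P y).
Proof.
  intros HR x y Hxy.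
  induction Hxy as [x y Hxy | x | x y _ IH | x y z _ IHxy _ IHyz].
  - apply HR, Hxy.
  - reflexivity.
  - symmetry; exact IH.
  - rewrite IHxy; exact IHyz.
Qed.

Lemma tau_mul_add p s a b : b < p -> tau p s (a * p + b) = a * s + Nat.min b (s - 1).
Proof.
  intros Hb. unfold tau.
  replace ((a * p + b) / p) with a by (apply Nat.div_unique with b; lia).
  replace ((a * p + b) mod p) with b by (apply Nat.mod_unique with a; lia).
  reflexivity.
Qed.

Lemma nat_mul_add_rem p x : 0 < p -> exists a b, b < p /\ x = a * p + b.
Proof.
  intros Hp. exists (x / p), (x mod p). split.
  - apply Nat.mod_upper_bound; lia.
  - rewrite (Nat.div_mod x p) at 1 by lia. lia.
Qed.

Lemma tau_add_period p s x : 0 < p -> tau p s (x + p) = tau p s x + s.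
Proof.
  intros Hp. destruct (nat_mul_add_rem p x Hp) as [a [b [Hb ->]]].
  replace (a * p + b + p) with ((a + 1) * p + b) by lia.
  rewrite !tau_mul_add by lia. lia.
Qed.

Lemma tau_monotone p s x y : 0 < p -> x <= y -> tau p s x <= tau p s y.
Proof.
  intros Hp Hxy.
  destruct (nat_mul_add_rem p x Hp) as [a [b [Hb ->]]].
  destruct (nat_mul_add_rem p y Hp) as [a' [b' [Hb' ->]]].
  rewrite !tau_mul_add by lia.
  assert (Ha : a <= a') by nia.
  destruct (Nat.eq_dec a a') as [<- | Hne].
  - lia.
  - assert ((a + 1) * s <= a' * s) by (apply Nat.mul_le_mono_r; lia). lia.
Qed.

Lemma tau_tau_le p s x : 0 < p -> 0 < s -> tau s p (tau p s x) <= x.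
Proof.
  intros Hp Hs. destruct (nat_mul_add_rem p x Hp) as [a [b [Hb ->]]].
  rewrite !tau_mul_add by lia. lia.
Qed.

Lemma tau_tau_id p s x : 0 < p -> p <= s -> tau s p (tau p s x) = x.
Proof.
  intros Hp Hps. destruct (nat_mul_add_rem p x Hp) as [a [b [Hb ->]]].
  rewrite !tau_mul_add by lia. lia.
Qed.

Lemma tau_eq0 p s x : good_pair p s -> tau p s x = 0 <-> x = 0.
Proof.
  intros Hg. assert (Hp : 0 < p) by (destruct Hg; lia).
  destruct (nat_mul_add_rem p x Hp) as [a [b [Hb ->]]].
  rewrite tau_mul_add by lia. destruct Hg; nia.
Qed.

Section Lambda.

Variables p q r : nat.

Lemma lam_le_of_le m n k m' n' k' :
  m <= m' -> n <= n' -> k <= k' -> lam_le p q r (m, n, k) (m', n', k').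
Proof.
  intros Hm Hn Hk. exists (m' - m, n' - n, k' - k). cbn [tadd].
  replace (m + (m' - m)) with m' by lia.
  replace (n + (n' - n)) with n' by lia.
  replace (k + (k' - k)) with k' by lia.
  apply rst_refl.
Qed.

Lemma lam_le_eq_trans x y z : lam_le p q r x y -> lam_eq p q r y z -> lam_le p q r x z.
Proof.
  intros [nu Hxy] Hyz. exists nu. apply rst_trans with y; assumption.
Qed.

Lemma lam_eq0 x : 0 < p -> 0 < r -> lam_eq p q r x (0, 0, 0) <-> x = (0, 0, 0).
Proof.
  intros Hp Hr. split.
  - intros Hx. apply (clos_rst_invariant _ (fun y => y = (0, 0, 0))) in Hx.
    + apply Hx; reflexivity.
    + intros y z [[[m n] k] [-> ->]]. cbn [tadd].
      split; intros E; injection E; lia.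
  - intros ->. apply rst_refl.
Qed.

End Lambda.

Section Transition.

Variables p q r s t u : nat.
Hypotheses (Hp : 0 < p) (Hq : 0 < q) (Hr : 0 < r).

Lemma T_lam_step x y : lam_step p q r x y -> lam_step s t u (T p q r s t u x) (T p q r s t u y).
Proof.
  intros [[[m n] k] [-> ->]]. exists (T p q r s t u (m, n, k)). cbn [tadd T].
  rewrite !Nat.add_0_r, !tau_add_period by assumption. split; reflexivity.
Qed.

Lemma T_lam_eq x y : lam_eq p q r x y -> lam_eq s t u (T p q r s t u x) (T p q r s t u y).
Proof. apply clos_rst_map, T_lam_step. Qed.

Lemma T_lam_le x y : lam_le p q r x y -> lam_le s t u (T p q r s t u x) (T p q r s t u y).
Proof.
  destruct x as [[m n] k]. intros [[[a b] c] Hxy].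
  apply lam_le_eq_trans with (T p q r s t u (tadd (m, n, k) (a, b, c))).
  - cbn [tadd T]. apply lam_le_of_le; apply tau_monotone; lia.
  - apply T_lam_eq, Hxy.
Qed.

Lemma T_T_id x : p <= s -> q <= t -> r <= u -> T s t u p q r (T p q r s t u x) = x.
Proof.
  intros Hps Hqt Hru. destruct x as [[m n] k]. cbn [T].
  rewrite !tau_tau_id by assumption. reflexivity.
Qed.

Lemma T_eq0 x : good_pair p s -> good_pair q t -> good_pair r u ->
  T p q r s t u x = (0, 0, 0) <-> x = (0, 0, 0).
Proof.
  intros G1 G2 G3. destruct x as [[m n] k]. cbn [T].
  split.
  - intros E. injection E as E1 E2 E3.
    rewrite (proj1 (tau_eq0 p s m G1) E1), (proj1 (tau_eq0 q t n G2) E2),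
      (proj1 (tau_eq0 r u k G3) E3).
    reflexivity.
  - intros E. injection E as -> -> ->.
    rewrite (proj2 (tau_eq0 p s 0 G1) eq_refl), (proj2 (tau_eq0 q t 0 G2) eq_refl),
      (proj2 (tau_eq0 r u 0 G3) eq_refl).
    reflexivity.
Qed.

Hypotheses (Hs : 0 < s) (Ht : 0 < t) (Hu : 0 < u).

Lemma T_T_le x : lam_le p q r (T s t u p q r (T p q r s t u x)) x.
Proof.
  destruct x as [[m n] k]. cbn [T]. apply lam_le_of_le; apply tau_tau_le; assumption.
Qed.

End Transition.

Theorem proposition3p3 (p q r s t u : nat) :
  0 < p -> 0 < q -> 0 < r -> 0 < s -> 0 < t -> 0 < u ->
  (forall x y, lam_eq p q r x y -> lam_eq s t u (T p q r s t u x) (T p q r s t u y)) /\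
  (forall x y, lam_le p q r x y -> lam_le s t u (T p q r s t u x) (T p q r s t u y)) /\
  (forall x, lam_le p q r (T s t u p q r (T p q r s t u x)) x) /\
  (p <= s -> q <= t -> r <= u ->
     forall x, lam_eq p q r (T s t u p q r (T p q r s t u x)) x) /\
  (good_pair p s -> good_pair q t -> good_pair r u ->
     forall x, lam_eq s t u (T p q r s t u x) (0, 0, 0) <-> lam_eq p q r x (0, 0, 0)).
Proof.
  intros Hp Hq Hr Hs Ht Hu.
  split; [| split; [| split; [| split]]].
  - exact (T_lam_eq p q r s t u Hp Hq Hr).
  - exact (T_lam_le p q r s t u Hp Hq Hr).
  - exact (T_T_le p q r s t u Hp Hq Hr Hs Ht Hu).
  - intros Hps Hqt Hru x. rewrite T_T_id by assumption. apply rst_refl.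
  - intros G1 G2 G3 x.
    rewrite (lam_eq0 s t u) by assumption. rewrite (lam_eq0 p q r) by assumption.
    apply T_eq0; assumption.
Qed.
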